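(* Let $A$ be a bivariate copula and $K_A$ a version of its Markov kernel such that the function $(x,y)\mapsto K_A(x,[0,y])$ on $[0,1]^2$ has a discontinuity. Then the sequence $(\Delta_N)_{N\in\mathbb{N}}$ given by $$\Delta_N:=\sup_{(x,y)\in[0,1]^2}\left|K_{\mathcal{B}_N(A)}(x,[0,y])-K_A(x,[0,y])\right|$$ does not converge to $0$ as $N\to\infty$.
   Context: A (bivariate) copula is a distribution function on $[0,1]^2$ with uniform marginals; each copula $B$ corresponds to a doubly stochastic measure $\mu_B$ with $B(x,y)=\mu_B([0,x]\times[0,y])$. A Markov kernel of $B$ is a map $K_B:[0,1]\times\mathcal{B}([0,1])\to[0,1]$, measurable in the first argument, a probability measure in the second, with $\int_{E_1}K_B(x,E_2)\,d\lambda(x)=\mu_B(E_1\times E_2)$ for all Borel $E_1,E_2$ ($\lambda$ = Lebesgue measure). Bernstein approximation: $p_{N,k}(u)=\binom Nk u^k(1-u)^{N-k}$ for $k\in\{0,\dots,N\}$ and $p_{N,k}\equiv0$ otherwise; $\mathcal{B}_N(A)(x,y)=\sum_{i,j=1}^N A(\tfrac iN,\tfrac jN)p_{N,i}(x)p_{N,j}(y)$, with Markov kernel version $K_{\mathcal{B}_N(A)}(x,[0,y])=N\sum_{i,j=1}^N A(\tfrac iN,\tfrac jN)\big(p_{N-1,i-1}(x)-p_{N-1,i}(x)\big)p_{N,j}(y)$. *)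

From HB Require Import structures.
From mathcomp Require Import all_boot all_order all_algebra.
From mathcomp Require Import all_classical all_reals all_analysis measurable_realfun.
Set Implicit Arguments. Unset Strict Implicit. Unset Printing Implicit Defensive.
Import Order.TTheory GRing.Theory Num.Theory.
Import numFieldNormedType.Exports.
Local Open Scope classical_set_scope.
Local Open Scope ring_scope.

Section Defs.
Variable R : realType.

Definition I01 : set R := `[0, 1]%classic.

Definition is_copula (A : R -> R -> R) : Prop :=
  [/\ (forall x, I01 x -> A x 0 = 0 /\ A 0 x = 0),
      (forall x, I01 x -> A x 1 = x /\ A 1 x = x) &
      (forall x1 x2 y1 y2, I01 x1 -> I01 x2 -> I01 y1 -> I01 y2 ->
         x1 <= x2 -> y1 <= y2 ->
         0 <= A x2 y2 - A x1 y2 - A x2 y1 + A x1 y1)].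

(** [K] is (a version of) the Markov kernel of the copula [A]:
    K(x,.) is a probability measure on the Borel sets of [0,1] for every
    x in [0,1], x |-> K(x,E) is measurable, and
    int_{E1} K(x,E2) dlambda(x) = mu_A(E1 x E2) for all Borel E1,E2 of [0,1],
    where mu_A is the doubly stochastic measure of A, i.e. the measure on
    [0,1]^2 with A(x,y) = mu_A([0,x] x [0,y]). *)
Definition markov_kernel_of (A : R -> R -> R)
    (K : R -> {measure set R -> \bar R}) : Prop :=
  [/\ (forall x, I01 x -> K x I01 = 1%E),
      (forall E, measurable E -> measurable_fun I01 (K ^~ E)) &
      exists mu : {measure set (R * R)%type -> \bar R},
        [/\ mu (~` (I01 `*` I01)) = 0%E,
            (forall x y, I01 x -> I01 y ->
               mu (`[0, x]%classic `*` `[0, y]%classic) = (A x y)%:E) &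
            (forall E1 E2, measurable E1 -> measurable E2 ->
               E1 `<=` I01 -> E2 `<=` I01 ->
               (\int[lebesgue_measure]_(x in E1) K x E2)%E = mu (E1 `*` E2))]].

Definition bern (N k : nat) (u : R) : R :=
  if (k <= N)%N then ('C(N, k))%:R * u ^+ k * (1 - u) ^+ (N - k) else 0.

(** K_{B_N(A)}(x,[0,y]) as given in the paper. *)
Definition bernstein_kernel (A : R -> R -> R) (N : nat) (x y : R) : R :=
  N%:R * \sum_(1 <= i < N.+1) \sum_(1 <= j < N.+1)
     A (i%:R / N%:R) (j%:R / N%:R)
       * (bern N.-1 i.-1 x - bern N.-1 i x) * bern N j y.

Definition kernel_error (A : R -> R -> R) (K : R -> {measure set R -> \bar R})
    (N : nat) (x y : R) : \bar R :=
  let I0y : set R := `[0, y]%classic in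
  `| (bernstein_kernel A N x y)%:E - K x I0y |%E.

Definition Delta (A : R -> R -> R) (K : R -> {measure set R -> \bar R})
    (N : nat) : \bar R :=
  ereal_sup [set e | exists x y, [/\ I01 x, I01 y & e = kernel_error A K N x y]].

Definition kernel_cdf (K : R -> {measure set R -> \bar R}) (p : R * R) : R :=
  let I0y : set R := `[0, p.2]%classic in fine (K p.1 I0y).

End Defs.

From HB Require Import structures.
From mathcomp Require Import all_boot all_order all_algebra.
From mathcomp Require Import all_classical all_reals all_analysis measurable_realfun.
Set Implicit Arguments. Unset Strict Implicit. Unset Printing Implicit Defensive.
Import Order.TTheory GRing.Theory Num.Theory.
Import numFieldNormedType.Exports.
Local Open Scope classical_set_scope.
Local Open Scope ring_scope.

(* Each K_{B_N(A)}(x,[0,y]) is a polynomial in (x,y), hence continuous.  If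
   Delta_N -> 0, then (x,y) |-> K_A(x,[0,y]) is a uniform limit on [0,1]^2 of
   continuous functions, hence continuous. *)

Section BernsteinKernel.
Variable R : realType.

Lemma bern_continuous (N k : nat) : continuous (@bern R N k).
Proof.
move=> u; rewrite /bern; case: (k <= N)%N; last exact: cvg_cst.
apply: cvgM; first apply: cvgM.
- exact: cvg_cst.
- exact: exprn_continuous.
- apply: (@continuous_comp _ _ _ (fun u : R => 1 - u) (fun v => v ^+ _)).
    by apply: cvgB; [exact: cvg_cst | exact: cvg_id].
  exact: exprn_continuous.
Qed.

Lemma bernstein_kernel_continuous (A : R -> R -> R) (N : nat) :
  continuous (fun p : R * R => bernstein_kernel A N p.1 p.2).
Proof.
move=> p; apply: cvgM; first exact: cvg_cst.
apply: (continuous_big add_continuous) => i _.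
apply: (continuous_big add_continuous) => j _ q.
apply: cvgM; first apply: cvgM.
- exact: cvg_cst.
- apply: (@continuous_comp _ _ _ fst (fun u => bern N.-1 i.-1 u - bern N.-1 i u)).
    exact: cvg_fst.
  by apply: cvgB; exact: bern_continuous.
- apply: (@continuous_comp _ _ _ snd (bern N j)); first exact: cvg_snd.
  exact: bern_continuous.
Qed.

End BernsteinKernel.

Lemma cvg_uniform_dominated (R : realType) (I U : choiceType)
    (F : set_system I) (D : set U) (f : I -> U -> R) (g : U -> R)
    (d : I -> \bar R) {FF : Filter F} :
  d @ F --> 0%E -> (forall i x, D x -> (`|g x - f i x|%:E <= d i)%E) ->
  {uniform D, f @ F --> g}.
Proof.
move=> d0 fd P /uniform_nbhs[E [entE EP]].
move: entE; rewrite -entourage_from_ballE => -[e /= e0 eE].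
have : \forall i \near F, (d i < e%:E)%E.
  apply: (d0 [set z | (z < e%:E)%E]).
  change (\forall z \near 0%:E, (z < e%:E)%E).
  apply/nbhs_EFin; near=> t; rewrite lte_fin; near: t.
  exact: lt_nbhsl.
apply: filterS => i die; apply: EP => x Dx; apply: eE.
by rewrite /ball /= -lte_fin (le_lt_trans (fd i x Dx)).
Unshelve. all: end_near. Qed.

Section MarkovKernelCdf.
Variables (R : realType) (K : R -> {measure set R -> \bar R}).
Hypothesis K_prob : forall x, I01 x -> K x (@I01 R) = 1%E.

Lemma kernel_cdfE (x y : R) : I01 x -> I01 y ->
  K x `[0, y]%classic = (kernel_cdf K (x, y))%:E.
Proof.
move=> Ix Iy; rewrite /kernel_cdf /= fineK // ge0_fin_numE ?measure_ge0 //.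
apply: (@le_lt_trans _ _ (K x (@I01 R))); last by rewrite K_prob // ltry.
apply: le_measure; rewrite ?inE; [exact: measurable_itv | exact: measurable_itv |].
move=> z /=; rewrite /I01 /= !in_itv /= => /andP[-> zy].
by move: Iy; rewrite /I01 /= in_itv /= => /andP[_]; exact: le_trans.
Qed.

Lemma kernel_error_le_Delta (A : R -> R -> R) (N : nat) (x y : R) :
  I01 x -> I01 y ->
  (`|kernel_cdf K (x, y) - bernstein_kernel A N x y|%:E <= Delta A K N)%E.
Proof.
move=> Ix Iy; apply: ereal_sup_ubound; exists x, y; split => //.
by rewrite /kernel_error kernel_cdfE // -EFinB abse_EFin distrC.
Qed.

End MarkovKernelCdf.

Theorem proposition4p4 (R : realType) (A : R -> R -> R)
    (K : R -> {measure set R -> \bar R}) :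
  is_copula A -> markov_kernel_of A K ->
  ~ {within (@I01 R `*` @I01 R), continuous (kernel_cdf K)} ->
  ~ (Delta A K @ \oo --> (0 : \bar R)%E).
Proof.
move=> _ [K_prob _ _] discontinuous Delta0; apply: discontinuous.
apply: (@uniform_limit_continuous_subspace _ _ _
  ((fun N p => bernstein_kernel A N p.1 p.2) @ \oo)).
- rewrite near_map; apply: nearW => N; apply: continuous_subspaceT.
  exact: bernstein_kernel_continuous.
- apply: (cvg_uniform_dominated Delta0) => N [x y] [Ix Iy].
  exact: kernel_error_le_Delta.
Qed.
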